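(* Over all 3-periodics of $\mathcal{E}$, the circumcenter $X_3^\dagger$ of the focus-inversive triangle moves on the circle with center and radius \[C_3^\dagger=\left(-c\left(1+\rho^2\frac{a^2+b^2}{2b^4}\right),0\right),\qquad R_3^\dagger=\rho^2\,\frac{a(\delta-b^2)}{2b^4}.\]
   Context: Let $a>b>0$ and let $\mathcal{E}$ be the ellipse $x^2/a^2+y^2/b^2=1$. Set $c=\sqrt{a^2-b^2}$, $\delta=\sqrt{a^4-a^2b^2+b^4}$, and let the foci be $f_1=(-c,0)$, $f_2=(c,0)$. A 3-periodic is a triangle $P_1P_2P_3$ with vertices on $\mathcal{E}$ such that at each vertex the normal to $\mathcal{E}$ bisects the angle formed by the two sides meeting at that vertex; these form a one-parameter family (one through every point of $\mathcal{E}$). Fix $\rho>0$; the focus-inversive triangle has vertices $P_i^\dagger=f_1+(\rho/d_{1,i})^2(P_i-f_1)$, $d_{1,i}=|P_i-f_1|$. *)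

From Stdlib Require Import Reals.
Open Scope R_scope.

Definition pt := (R * R)%type.

Definition dot (p q : pt) : R := fst p * fst q + snd p * snd q.
Definition sub (p q : pt) : pt := (fst p - fst q, snd p - snd q).
Definition add (p q : pt) : pt := (fst p + fst q, snd p + snd q).
Definition scal (k : R) (p : pt) : pt := (k * fst p, k * snd p).
Definition dist2 (p q : pt) : R := dot (sub p q) (sub p q).
Definition pdist (p q : pt) : R := sqrt (dist2 p q).

Definition on_ellipse (a b : R) (p : pt) : Prop :=
  (fst p)^2 / a^2 + (snd p)^2 / b^2 = 1.

(* an outward normal vector to the ellipse at p (gradient / 2) *)
Definition ell_normal (a b : R) (p : pt) : pt := (fst p / a^2, snd p / b^2).

(* At vertex P with neighbours Q and S, the normal to the ellipse bisects the
   angle QPS: the normal makes equal angles with the unit vectors along PQ and PS. *)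
Definition normal_bisects (a b : R) (P Q S : pt) : Prop :=
  dot (scal (/ pdist Q P) (sub Q P)) (ell_normal a b P)
  = dot (scal (/ pdist S P) (sub S P)) (ell_normal a b P).

Definition noncollinear (P1 P2 P3 : pt) : Prop :=
  (fst P2 - fst P1) * (snd P3 - snd P1) - (snd P2 - snd P1) * (fst P3 - fst P1) <> 0.

Definition three_periodic (a b : R) (P1 P2 P3 : pt) : Prop :=
  on_ellipse a b P1 /\ on_ellipse a b P2 /\ on_ellipse a b P3 /\
  noncollinear P1 P2 P3 /\
  normal_bisects a b P1 P3 P2 /\
  normal_bisects a b P2 P1 P3 /\
  normal_bisects a b P3 P2 P1.

Definition inversion (f : pt) (rho : R) (P : pt) : pt :=
  add f (scal ((rho / pdist P f)^2) (sub P f)).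

Definition is_circumcenter (X Q1 Q2 Q3 : pt) : Prop :=
  pdist X Q1 = pdist X Q2 /\ pdist X Q2 = pdist X Q3.

From Stdlib Require Import Reals Lra Nsatz.
Open Scope R_scope.

(* Write the vertices as P_i = (a X_i, b Y_i) with X_i^2 + Y_i^2 = 1 and c^2 = a^2 - b^2.
   1. Metric facts: |P_i f1| = a + c X_i, and |P_i P_j|^2 = g_ij (a^2 + b^2 - c^2 (X_i X_j
      - Y_i Y_j)) with g_ij = 1 - X_i X_j - Y_i Y_j.
   2. The reflection law at P_i says that g_ij / |P_i P_j| is the same for both neighbours,
      so it is a constant k > 0 on the whole triangle; squaring turns g_ij = k |P_i P_j|
      into the bilinear relation (al-2) X_i X_j - (al+2) Y_i Y_j = be, al = 2 k^2 c^2.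
   3. Three vertices of a nondegenerate triangle pairwise in such a relation force the
      closure condition p q + be (p + q) = 0 (Cayley-type), which ties al to a and b.
   4. Equidistance from the inverted vertices is, in the normalized unknown
      Y = (X - f1)/rho^2, a curve m (a + c X)^2 - 2((a X + c) Y_x + b Y Y_y) + 1 = 0
      through the three normalized vertices.  The "vertex conic" of the first vertex is
      another curve of the same shape through them, so both are proportional; this gives
      Y explicitly, and a polynomial identity (valid under the closure condition) puts it
      on the circle of center -c (a^2+b^2)/(2 b^4) and radius a (delta - b^2)/(2 b^4).
      Scaling back by rho^2 gives the theorem. *)

Lemma affine_zero_on_triangle u v w X1 Y1 X2 Y2 X3 Y3 :
  u*X1 + v*Y1 + w = 0 -> u*X2 + v*Y2 + w = 0 -> u*X3 + v*Y3 + w = 0 ->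
  (X2-X1)*(Y3-Y1) - (Y2-Y1)*(X3-X1) <> 0 -> u = 0 /\ v = 0 /\ w = 0.
Proof.
intros h1 h2 h3 hN.
assert (Hu : u * ((X2-X1)*(Y3-Y1) - (Y2-Y1)*(X3-X1)) = 0) by nsatz.
assert (Hv : v * ((X2-X1)*(Y3-Y1) - (Y2-Y1)*(X3-X1)) = 0) by nsatz.
apply Rmult_integral in Hu; apply Rmult_integral in Hv.
destruct Hu as [Hu|Hu]; [|contradiction]; destruct Hv as [Hv|Hv]; [|contradiction].
subst. repeat split; lra.
Qed.

(* Two distinct points U, V of the unit circle satisfy 1 - U.V > 0 (it is |U - V|^2 / 2). *)
Lemma unit_circle_gap_pos Xi Yi Xj Yj :
  Xi*Xi+Yi*Yi = 1 -> Xj*Xj+Yj*Yj = 1 -> (Xi <> Xj \/ Yi <> Yj) ->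
  0 < 1 - Xi*Xj - Yi*Yj.
Proof.
intros ci cj hne.
assert (E : 2*(1 - Xi*Xj - Yi*Yj) = (Xi-Xj)*(Xi-Xj) + (Yi-Yj)*(Yi-Yj)) by nra.
destruct hne as [h|h].
- assert (0 < (Xi-Xj)*(Xi-Xj)) by (apply Rsqr_pos_lt; lra). nra.
- assert (0 < (Yi-Yj)*(Yi-Yj)) by (apply Rsqr_pos_lt; lra). nra.
Qed.

Lemma noncollinear_distinct X1 Y1 X2 Y2 X3 Y3 :
  (X2-X1)*(Y3-Y1) - (Y2-Y1)*(X3-X1) <> 0 ->
  (X2 <> X1 \/ Y2 <> Y1) /\ (X3 <> X1 \/ Y3 <> Y1) /\ (X3 <> X2 \/ Y3 <> Y2).
Proof.
intro hN.
repeat split; (destruct (Req_dec X2 X1); destruct (Req_dec Y2 Y1);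
  destruct (Req_dec X3 X1); destruct (Req_dec Y3 Y1);
  destruct (Req_dec X3 X2); destruct (Req_dec Y3 Y2);
  subst; try tauto; exfalso; apply hN; ring).
Qed.

Lemma pdist_sym p q : pdist p q = pdist q p.
Proof. unfold pdist, dist2, dot, sub. f_equal. simpl. ring. Qed.

Lemma ellipse_param a b P : 0 < a -> 0 < b -> on_ellipse a b P ->
  exists X Y, P = (a*X, b*Y) /\ X*X + Y*Y = 1.
Proof.
destruct P as [x y]. unfold on_ellipse; simpl. intros ha hb he.
exists (x/a), (y/b). split.
- f_equal; field; lra.
- rewrite <- he. field. lra.
Qed.

Lemma chord_sq a b c Xi Yi Xj Yj :
  c*c = a*a-b*b -> Xi*Xi+Yi*Yi = 1 -> Xj*Xj+Yj*Yj = 1 ->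
  (a*Xi - a*Xj)*(a*Xi - a*Xj) + (b*Yi - b*Yj)*(b*Yi - b*Yj)
  = (1 - Xi*Xj - Yi*Yj)*((a*a+b*b) - c*c*(Xi*Xj - Yi*Yj)).
Proof. intros. nsatz. Qed.

Lemma chord_length a b c Xi Yi Xj Yj :
  0 < b -> b < a -> c*c = a*a-b*b -> Xi*Xi+Yi*Yi = 1 -> Xj*Xj+Yj*Yj = 1 ->
  (Xi <> Xj \/ Yi <> Yj) ->
  0 < pdist (a*Xi, b*Yi) (a*Xj, b*Yj) /\
  pdist (a*Xi, b*Yi) (a*Xj, b*Yj) * pdist (a*Xi, b*Yi) (a*Xj, b*Yj)
  = (a*Xi - a*Xj)*(a*Xi - a*Xj) + (b*Yi - b*Yj)*(b*Yi - b*Yj).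
Proof.
intros hb hab hc2 ci cj hne.
assert (hg := unit_circle_gap_pos Xi Yi Xj Yj ci cj hne).
assert (hle : Xi*Xj - Yi*Yj <= 1)
  by (pose proof (Rle_0_sqr (Xi-Xj)); pose proof (Rle_0_sqr (Yi+Yj)); unfold Rsqr in *; nra).
assert (hD : 0 < (a*Xi - a*Xj)*(a*Xi - a*Xj) + (b*Yi - b*Yj)*(b*Yi - b*Yj)).
{ rewrite (chord_sq a b c) by assumption. apply Rmult_lt_0_compat; nra. }
unfold pdist, dist2, dot, sub; cbn [fst snd]. split.
- apply sqrt_lt_R0. lra.
- apply sqrt_sqrt. lra.
Qed.

Lemma focal_dist_sq a b c X Y : c*c = a*a-b*b -> X*X+Y*Y = 1 ->
  (a*X - -c)*(a*X - -c) + (b*Y - 0)*(b*Y - 0) = (a+c*X)*(a+c*X).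
Proof. intros. nsatz. Qed.

Lemma focal_dist a b c X Y : 0 < b -> b < a -> 0 < c -> c*c = a*a-b*b -> X*X+Y*Y = 1 ->
  pdist (a*X, b*Y) (-c, 0) = a + c*X.
Proof.
intros hb hab hc hc2 hxy. unfold pdist, dist2, dot, sub; simpl.
rewrite (focal_dist_sq a b c) by assumption.
apply sqrt_square. nra.
Qed.

Lemma normal_component a b X Y X' Y' :
  a <> 0 -> b <> 0 -> X*X+Y*Y = 1 ->
  dot (scal (/ pdist (a*X', b*Y') (a*X, b*Y)) (sub (a*X', b*Y') (a*X, b*Y))) (ell_normal a b (a*X, b*Y))
  = - (1 - X*X' - Y*Y') / pdist (a*X', b*Y') (a*X, b*Y).
Proof.
intros ha hb hxy. unfold dot, scal, sub, ell_normal; cbn [fst snd].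
set (d := pdist _ _).
assert (E : (a*X'-a*X)*(a*X/a^2) + (b*Y'-b*Y)*(b*Y/b^2) = -(1 - X*X' - Y*Y')).
{ transitivity (X*X' + Y*Y' - (X*X + Y*Y)); [field; auto|]. rewrite hxy. ring. }
transitivity (/d * ((a*X'-a*X)*(a*X/a^2) + (b*Y'-b*Y)*(b*Y/b^2))); [ring|].
rewrite E. unfold Rdiv. ring.
Qed.

Lemma bisector_ratio a b X Y X' Y' X'' Y'' :
  a <> 0 -> b <> 0 -> X*X+Y*Y = 1 ->
  normal_bisects a b (a*X, b*Y) (a*X', b*Y') (a*X'', b*Y'') ->
  (1 - X*X' - Y*Y') / pdist (a*X', b*Y') (a*X, b*Y)
  = (1 - X*X'' - Y*Y'') / pdist (a*X'', b*Y'') (a*X, b*Y).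
Proof.
unfold normal_bisects. intros ha hb hxy H.
rewrite !normal_component in H by assumption. lra.
Qed.

Lemma bilinear_of_ratio a b c k Xi Yi Xj Yj d :
  c*c = a*a-b*b -> Xi*Xi+Yi*Yi = 1 -> Xj*Xj+Yj*Yj = 1 ->
  d*d = (a*Xi - a*Xj)*(a*Xi - a*Xj) + (b*Yi - b*Yj)*(b*Yi - b*Yj) ->
  1 - Xi*Xj - Yi*Yj = k*d -> 1 - Xi*Xj - Yi*Yj <> 0 ->
  (2*k*k*(c*c) - 2)*Xi*Xj + (-(2*k*k*(c*c)) - 2)*Yi*Yj = 2*k*k*(a*a+b*b) - 2.
Proof.
intros hc2 ci cj hd hg hg0. rewrite (chord_sq a b c) in hd by assumption.
set (g := 1 - Xi*Xj - Yi*Yj) in *.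
assert (H : g*(g - k*k*((a*a+b*b) - c*c*(Xi*Xj - Yi*Yj))) = 0).
{ assert (g*g = k*k*(d*d)) by (rewrite hg; ring). rewrite hd in H. lra. }
apply Rmult_integral in H. destruct H as [H|H]; [contradiction|].
unfold g in H. lra.
Qed.

(* For B(U, V) = p Ux Vx + q Uy Vy: the quantity that vanishes at U = (X, Y) when the two
   points V of the unit circle with B(U, V) = be are themselves in relation (see
   [chord_closure]). *)
Definition chord_invariant (p q be X Y : R) : R :=
  be*be*(p+q) - p*q*(p*(X*X)+q*(Y*Y)) - be*(p*p*(X*X)+q*q*(Y*Y)).

(* Core algebra of [chord_closure]: w is the normal of the line, S and D the sum and
   difference of the two intersection points, written in the frame (w, w^perp). *)
Lemma chord_closure_core wx wy sx sy dx dy t n p q be :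
  n = wx*wx+wy*wy -> n*sx = 2*be*wx -> n*sy = 2*be*wy -> n*dx = -wy*t -> n*dy = wx*t ->
  t*t = n*(dx*dx+dy*dy) -> sx*sx+sy*sy+dx*dx+dy*dy = 4 ->
  p*(sx*sx - dx*dx) + q*(sy*sy - dy*dy) = 4*be ->
  n*n*n*(be*be*(p+q)*n - (p*wy*wy + q*wx*wx)*n - be*n*n) = 0.
Proof. intros. nsatz. Qed.

Lemma chord_closure p q be X1 Y1 X2 Y2 X3 Y3 :
  X2*X2+Y2*Y2 = 1 -> X3*X3+Y3*Y3 = 1 ->
  p*X1*X2 + q*Y1*Y2 = be -> p*X1*X3 + q*Y1*Y3 = be -> p*X2*X3 + q*Y2*Y3 = be ->
  (X2-X3)*(X2-X3)+(Y2-Y3)*(Y2-Y3) <> 0 ->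
  (p*X1)*(p*X1) + (q*Y1)*(q*Y1) <> 0 ->
  chord_invariant p q be X1 Y1 = 0.
Proof.
intros c2 c3 b12 b13 b23 hd hn. unfold chord_invariant.
set (wx := p*X1). set (wy := q*Y1).
set (sx := X2+X3). set (sy := Y2+Y3). set (dx := X2-X3). set (dy := Y2-Y3).
set (n := wx*wx+wy*wy). set (t := -wy*dx + wx*dy).
assert (hwd : wx*dx + wy*dy = 0) by (unfold wx,wy,dx,dy; nra).
assert (hws : wx*sx + wy*sy = 2*be) by (unfold wx,wy,sx,sy; nra).
assert (hsd : sx*dx + sy*dy = 0) by (unfold sx,sy,dx,dy; nra).
assert (ht : t*t = n*(dx*dx+dy*dy)).
{ transitivity (n*(dx*dx+dy*dy) - (wx*dx+wy*dy)*(wx*dx+wy*dy)); [unfold t,n; ring|].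
  rewrite hwd. ring. }
assert (tnz : t <> 0).
{ intro H0. rewrite H0, Rmult_0_r in ht. symmetry in ht.
  apply Rmult_integral in ht. tauto. }
assert (hu : -wy*sx + wx*sy = 0).
{ assert (E : (-wy*sx + wx*sy)*t = n*(sx*dx+sy*dy) - (wx*sx+wy*sy)*(wx*dx+wy*dy))
    by (unfold t,n; ring).
  rewrite hsd, hwd, !Rmult_0_r, Rminus_0_r in E.
  apply Rmult_integral in E. tauto. }
assert (hsx : n*sx = 2*be*wx).
{ transitivity (wx*(wx*sx+wy*sy) - wy*(-wy*sx + wx*sy)); [unfold n; ring|].
  rewrite hws, hu. ring. }
assert (hsy : n*sy = 2*be*wy).
{ transitivity (wy*(wx*sx+wy*sy) + wx*(-wy*sx + wx*sy)); [unfold n; ring|].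
  rewrite hws, hu. ring. }
assert (hdx : n*dx = -wy*t).
{ transitivity (wx*(wx*dx+wy*dy) - wy*t); [unfold n,t; ring|]. rewrite hwd. ring. }
assert (hdy : n*dy = wx*t).
{ transitivity (wy*(wx*dx+wy*dy) + wx*t); [unfold n,t; ring|]. rewrite hwd. ring. }
assert (h4 : sx*sx+sy*sy+dx*dx+dy*dy = 4) by (unfold sx,sy,dx,dy; nra).
assert (hB : p*(sx*sx - dx*dx) + q*(sy*sy - dy*dy) = 4*be) by (unfold sx,sy,dx,dy; nra).
assert (HH := chord_closure_core wx wy sx sy dx dy t n p q be eq_refl hsx hsy hdx hdy ht h4 hB).
assert (n*n*n*n <> 0) by (repeat apply Rmult_integral_contrapositive_currified; auto).
apply (Rmult_eq_reg_l (n*n*n*n)); auto. rewrite Rmult_0_r, <- HH. unfold n, wx, wy. ring.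
Qed.

Lemma chord_invariant_unit p q be X Y : X*X+Y*Y = 1 ->
  chord_invariant p q be X Y
  = be*be*(p+q) - p*q*q - be*q*q - (X*X)*(p-q)*(p*q + be*(p+q)).
Proof.
intro hxy. unfold chord_invariant.
replace (Y*Y) with (1 - X*X) by lra. ring.
Qed.

(* Three points of the unit circle pairwise in relation B(U, V) = be, all with the same
   X^2, are among the four points (+-X, +-Y) and hence collinear (when q <> 0). *)
Lemma symmetric_triangle_collinear p q be X1 Y1 X2 Y2 X3 Y3 :
  X1*X1+Y1*Y1 = 1 -> X2*X2+Y2*Y2 = 1 -> X3*X3+Y3*Y3 = 1 ->
  p*X1*X2 + q*Y1*Y2 = be -> p*X1*X3 + q*Y1*Y3 = be -> p*X2*X3 + q*Y2*Y3 = be ->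
  q <> 0 -> X1*X1 = X2*X2 -> X1*X1 = X3*X3 ->
  (X2-X1)*(Y3-Y1) - (Y2-Y1)*(X3-X1) = 0.
Proof.
intros c1 c2 c3 b12 b13 b23 hq e2 e3.
assert (f2 : Y2*Y2 = Y1*Y1) by lra. assert (f3 : Y3*Y3 = Y1*Y1) by lra.
symmetry in e2, e3.
destruct (Rsqr_eq _ _ e2) as [-> | ->]; destruct (Rsqr_eq _ _ e3) as [-> | ->];
destruct (Rsqr_eq _ _ f2) as [-> | ->]; destruct (Rsqr_eq _ _ f3) as [-> | ->];
  try ring;
  (assert (HY : q*(Y1*Y1) = 0) by nra;
   apply Rmult_integral in HY; destruct HY as [HY|HY]; [contradiction|];
   apply Rmult_integral in HY; destruct HY as [HY|HY]; rewrite HY; ring).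
Qed.

Lemma cayley_closure p q be X1 Y1 X2 Y2 X3 Y3 :
  q <> 0 -> p <> q ->
  X1*X1+Y1*Y1 = 1 -> X2*X2+Y2*Y2 = 1 -> X3*X3+Y3*Y3 = 1 ->
  (X2-X1)*(Y3-Y1) - (Y2-Y1)*(X3-X1) <> 0 ->
  p*X1*X2 + q*Y1*Y2 = be -> p*X1*X3 + q*Y1*Y3 = be -> p*X2*X3 + q*Y2*Y3 = be ->
  p*q + be*(p+q) = 0.
Proof.
intros hq hpq c1 c2 c3 hN b12 b13 b23.
destruct (Req_dec (p*q + be*(p+q)) 0) as [HG|HG]; [exact HG|exfalso].
(* a vertex U with B(U, .) = 0 would force p = be = 0, hence the closure condition *)
assert (Hw : forall X Y X' Y', X*X+Y*Y = 1 -> p*X*X' + q*Y*Y' = be ->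
          (p*X)*(p*X) + (q*Y)*(q*Y) <> 0).
{ intros X Y X' Y' cc bb H. apply HG.
  destruct (Rplus_sqr_eq_0 _ _ H) as [hpX hqY].
  assert (hY : Y = 0) by (apply Rmult_integral in hqY; tauto).
  subst Y. assert (hp : p = 0) by nra.
  assert (hbe : be = 0) by (rewrite <- bb, hp; ring).
  rewrite hp, hbe. ring. }
destruct (noncollinear_distinct _ _ _ _ _ _ hN) as [n12 [n13 n23]].
assert (dist_nz : forall Xi Yi Xj Yj, (Xj <> Xi \/ Yj <> Yi) ->
          (Xi-Xj)*(Xi-Xj)+(Yi-Yj)*(Yi-Yj) <> 0).
{ intros Xi Yi Xj Yj hne H. destruct (Rplus_sqr_eq_0 _ _ H). destruct hne; lra. }
assert (b21 : p*X2*X1 + q*Y2*Y1 = be) by (rewrite <- b12; ring).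
assert (b31 : p*X3*X1 + q*Y3*Y1 = be) by (rewrite <- b13; ring).
assert (b32 : p*X3*X2 + q*Y3*Y2 = be) by (rewrite <- b23; ring).
assert (E1 := chord_closure p q be X1 Y1 X2 Y2 X3 Y3 c2 c3 b12 b13 b23
                (dist_nz _ _ _ _ n23) (Hw _ _ _ _ c1 b12)).
assert (E2 := chord_closure p q be X2 Y2 X1 Y1 X3 Y3 c1 c3 b21 b23 b13
                (dist_nz _ _ _ _ n13) (Hw _ _ _ _ c2 b21)).
assert (E3 := chord_closure p q be X3 Y3 X1 Y1 X2 Y2 c1 c2 b31 b32 b12
                (dist_nz _ _ _ _ n12) (Hw _ _ _ _ c3 b31)).
rewrite chord_invariant_unit in E1, E2, E3 by assumption.
assert (hK : (p-q)*(p*q + be*(p+q)) <> 0)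
  by (apply Rmult_integral_contrapositive_currified; lra).
assert (e2 : X1*X1 = X2*X2).
{ apply (Rmult_eq_reg_r ((p-q)*(p*q + be*(p+q)))); [lra|auto]. }
assert (e3 : X1*X1 = X3*X3).
{ apply (Rmult_eq_reg_r ((p-q)*(p*q + be*(p+q)))); [lra|auto]. }
exact (hN (symmetric_triangle_collinear p q be X1 Y1 X2 Y2 X3 Y3 c1 c2 c3 b12 b13 b23 hq e2 e3)).
Qed.

(* Coefficients of the "vertex conic" of U1 = (X1, Y1), with Ys standing for Y1^2:
   the curve f2 X^2 + f1 X + g1 Y + f0 = 0, which passes through U1 and through both
   points V of the unit circle with p X1 Vx + q Y1 Vy = be (see [vconic_expand]). *)
Definition vconic2 (p q X1 Ys : R) : R := p*p*(X1*X1) + q*q*Ys.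
Definition vconic1 (p q be X1 Ys : R) : R := p*X1*(q*Ys - p*(X1*X1) - be).
Definition vconic0 (p q be X1 Ys : R) : R := -(q*q*Ys + be*(q*Ys - p*(X1*X1))).
Definition vconicY (p q be X1 Y1 : R) : R := q*Y1*(q*(Y1*Y1) - p*(X1*X1) + be).
Definition vconicY_sq (p q be X1 Ys : R) : R :=
  q*q*Ys*((q*Ys - p*(X1*X1) + be)*(q*Ys - p*(X1*X1) + be)).

(* Numerator and denominator of the normalized circumcenter (see [inverted_center]). *)
Definition center_num (a c p q be X1 Ys : R) : R :=
  2*a*vconic2 p q X1 Ys - c*vconic1 p q be X1 Ys.
Definition center_den (a c p q be X1 Ys : R) : R :=
  a*c*c*vconic0 p q be X1 Ys - a*vconic2 p q X1 Ys*(a*a-2*c*c) - c*c*c*vconic1 p q be X1 Ys.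

(* 256 b^8 (C^2 - R^2) for the claimed center abscissa C and radius R (b2 stands for b^2). *)
Definition radius_gap (a b2 c al : R) : R :=
  64*c*c*(a*a+b2)*(a*a+b2) - a*a*(2*al*c*c+4*a*a-4*b2)*(2*al*c*c+4*a*a-4*b2).

(* 256 b^8 D^2 times the power of the normalized circumcenter with respect to the
   claimed circle, as a polynomial in the data of the first vertex. *)
Definition circle_residual (a b2 c al p q be X1 Ys : R) : R :=
  let T := center_num a c p q be X1 Ys in let D := center_den a c p q be X1 Ys in
  64*(T*T*b2^4*c*c + vconicY_sq p q be X1 Ys*a*a*b2^3*c^4 + 2*D*T*(a*a+b2)*b2^2*c*c)
  + D*D*radius_gap a b2 c al.

Lemma vconic_expand p q be X1 Y1 X Y :
  vconic2 p q X1 (Y1*Y1)*(X*X) + vconic1 p q be X1 (Y1*Y1)*X + vconicY p q be X1 Y1*Y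
    + vconic0 p q be X1 (Y1*Y1)
  = (p*X1*X + q*Y1*Y - be)*(p*X1*X - q*Y1*Y + q*Y1*Y1 - p*X1*X1) + q*q*(Y1*Y1)*(X*X+Y*Y-1).
Proof. unfold vconic2, vconic1, vconicY, vconic0. ring. Qed.

Lemma vconic_zero p q be X1 Y1 X Y :
  X1*X1+Y1*Y1 = 1 -> X*X+Y*Y = 1 ->
  (p*X1*X + q*Y1*Y = be \/ (X = X1 /\ Y = Y1)) ->
  vconic2 p q X1 (Y1*Y1)*(X*X) + vconic1 p q be X1 (Y1*Y1)*X + vconicY p q be X1 Y1*Y
    + vconic0 p q be X1 (Y1*Y1) = 0.
Proof.
intros c1 c H. rewrite vconic_expand, c.
destruct H as [H | [-> ->]].
- rewrite H. ring.
- ring.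
Qed.

Lemma conics_proportional A2 A1 B1 A0 f2 f1 g1 f0 X1 Y1 X2 Y2 X3 Y3 :
  (X2-X1)*(Y3-Y1) - (Y2-Y1)*(X3-X1) <> 0 ->
  A2*(X1*X1) + A1*X1 + B1*Y1 + A0 = 0 -> f2*(X1*X1) + f1*X1 + g1*Y1 + f0 = 0 ->
  A2*(X2*X2) + A1*X2 + B1*Y2 + A0 = 0 -> f2*(X2*X2) + f1*X2 + g1*Y2 + f0 = 0 ->
  A2*(X3*X3) + A1*X3 + B1*Y3 + A0 = 0 -> f2*(X3*X3) + f1*X3 + g1*Y3 + f0 = 0 ->
  A1*f2 = A2*f1 /\ B1*f2 = A2*g1 /\ A0*f2 = A2*f0.
Proof.
intros hN hA1 hf1 hA2 hf2 hA3 hf3.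
assert (L : forall X Y, (f2*A1 - A2*f1)*X + (f2*B1 - A2*g1)*Y + (f2*A0 - A2*f0)
  = f2*(A2*(X*X)+A1*X+B1*Y+A0) - A2*(f2*(X*X)+f1*X+g1*Y+f0)) by (intros; ring).
destruct (affine_zero_on_triangle (f2*A1 - A2*f1) (f2*B1 - A2*g1) (f2*A0 - A2*f0)
            X1 Y1 X2 Y2 X3 Y3) as [u0 [v0 w0]];
  [rewrite L, hA1, hf1; ring | rewrite L, hA2, hf2; ring | rewrite L, hA3, hf3; ring
  | exact hN | lra].
Qed.

(* Solving the proportionality for the normalized circumcenter (Yx, Yy): the curve
   m (a + c X)^2 - 2((a X + c) Yx + b Y Yy) + 1 = 0 proportional to a curve with
   coefficients f2 <> 0, f1, g1, f0 determines Yx and Yy. *)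
Lemma inverted_center a b c m Yx Yy f2 f1 g1 f0 :
  a <> 0 -> b <> 0 -> c <> 0 -> f2 <> 0 ->
  2*a*(c*m - Yx)*f2 = m*c*c*f1 -> -2*b*Yy*f2 = m*c*c*g1 ->
  (m*a*a - 2*c*Yx + 1)*f2 = m*c*c*f0 ->
  let D := a*c*c*f0 - a*f2*(a*a-2*c*c) - c*c*c*f1 in
  D <> 0 /\ Yx = c*(2*a*f2 - c*f1)/(2*D) /\ Yy = -(a*c*c*g1)/(2*b*D).
Proof.
intros ha hb hc hf e1 eY e0 D.
assert (hmD : m*D = a*f2) by (unfold D; nsatz).
assert (hD : D <> 0) by (intro H0; rewrite H0, Rmult_0_r in hmD; symmetry in hmD;
                          apply Rmult_integral in hmD; tauto).
assert (hm : m = a*f2/D) by (rewrite <- hmD; field; exact hD).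
subst m. repeat split; [exact hD | |].
- apply (Rmult_eq_reg_l (2*a*f2)); [|apply Rmult_integral_contrapositive_currified; lra].
  replace (2*a*f2*Yx) with (2*a*c*(a*f2/D)*f2 - a*f2/D*c*c*f1) by (rewrite <- e1; ring).
  field. exact hD.
- apply (Rmult_eq_reg_l (-2*b*f2)); [|apply Rmult_integral_contrapositive_currified; lra].
  replace (-2*b*f2*Yy) with (a*f2/D*c*c*g1) by (rewrite <- eY; ring).
  field. auto.
Qed.

(* The explicit quotient was obtained by
   polynomial division of (8 al)^5 times the residual by the closure relation. *)
Lemma circle_residual_zero a c al X : al <> 0 -> 8*al*(a*a) = c*c*(12+4*al-al*al) ->
  circle_residual a (a*a-c*c) c al (al-2) (-al-2) (1-al*al/4) X (1-X*X) = 0.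
Proof.
intros Hal Hr.
assert (H : (8*al)^5 * circle_residual a (a*a-c*c) c al (al-2) (-al-2) (1-al*al/4) X (1-X*X)
  = (
    - 4718592*a^2*c^8*al^5*X^2 + 12582912*a^2*c^8*al^5*X^4 - 8388608*a^2*c^8*al^5*X^6
    - 7864320*a^2*c^8*al^6*X^2 + 16777216*a^2*c^8*al^6*X^4 - 8388608*a^2*c^8*al^6*X^6
    - 4063232*a^2*c^8*al^7*X^2 + 6291456*a^2*c^8*al^7*X^4 - 2097152*a^2*c^8*al^7*X^6
    - 262144*a^2*c^8*al^8*X^2 + 294912*a^2*c^8*al^9*X^2 - 262144*a^2*c^8*al^9*X^4
    + 32768*a^2*c^8*al^10*X^2 - 8192*a^2*c^8*al^11*X^2 - 3145728*a^3*c^7*al^5*X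
    + 4194304*a^3*c^7*al^5*X^3 - 4194304*a^3*c^7*al^6*X + 10485760*a^3*c^7*al^6*X^3
    - 8388608*a^3*c^7*al^6*X^5 - 786432*a^3*c^7*al^7*X + 2097152*a^3*c^7*al^7*X^3
    + 1048576*a^3*c^7*al^8*X - 3145728*a^3*c^7*al^8*X^3 + 2097152*a^3*c^7*al^8*X^5
    + 458752*a^3*c^7*al^9*X - 786432*a^3*c^7*al^9*X^3 + 131072*a^3*c^7*al^10*X^3
    - 16384*a^3*c^7*al^11*X - 524288*a^4*c^6*al^5 + 18874368*a^4*c^6*al^5*X^2
    - 50331648*a^4*c^6*al^5*X^4 + 33554432*a^4*c^6*al^5*X^6 - 524288*a^4*c^6*al^6
    + 24117248*a^4*c^6*al^6*X^2 - 41943040*a^4*c^6*al^6*X^4 + 16777216*a^4*c^6*al^6*X^6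
    + 131072*a^4*c^6*al^7 + 5242880*a^4*c^6*al^7*X^2 - 6291456*a^4*c^6*al^7*X^4
    + 262144*a^4*c^6*al^8 - 2621440*a^4*c^6*al^8*X^2 + 4194304*a^4*c^6*al^8*X^4
    + 32768*a^4*c^6*al^9 - 393216*a^4*c^6*al^9*X^2 - 524288*a^4*c^6*al^9*X^4
    - 32768*a^4*c^6*al^10 + 196608*a^4*c^6*al^10*X^2 - 8192*a^4*c^6*al^11
    + 6291456*a^5*c^5*al^5*X - 8388608*a^5*c^5*al^5*X^3 + 5242880*a^5*c^5*al^6*X
    - 16777216*a^5*c^5*al^6*X^3 + 16777216*a^5*c^5*al^6*X^5 - 1048576*a^5*c^5*al^7*X
    + 4194304*a^5*c^5*al^7*X^3 - 8388608*a^5*c^5*al^7*X^5 - 1572864*a^5*c^5*al^8*X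
    + 4194304*a^5*c^5*al^8*X^3 - 131072*a^5*c^5*al^9*X - 524288*a^5*c^5*al^9*X^3
    + 65536*a^5*c^5*al^10*X - 18874368*a^6*c^4*al^5*X^2 + 50331648*a^6*c^4*al^5*X^4
    - 33554432*a^6*c^4*al^5*X^6 - 12582912*a^6*c^4*al^6*X^2 + 16777216*a^6*c^4*al^6*X^4
    + 1048576*a^6*c^4*al^7*X^2 - 4194304*a^6*c^4*al^7*X^4 + 1048576*a^6*c^4*al^8*X^2
    - 131072*a^6*c^4*al^9*X^2
    ) * (8*al*(a*a) - c*c*(12+4*al-al*al))).
{ unfold circle_residual, center_num, center_den, radius_gap, vconic2, vconic1,
    vconicY_sq, vconic0.
  field. }
rewrite Hr, Rminus_diag, Rmult_0_r in H.
apply Rmult_integral in H; destruct H as [H|H]; [|exact H].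
exfalso. apply (pow_nonzero (8*al) 5); [lra|exact H].
Qed.

Lemma center_on_circle a b c al X1 Y1 Yx Yy :
  b <> 0 -> c*c = a*a - b*b -> al <> 0 -> 8*al*(a*a) = c*c*(12+4*al-al*al) ->
  X1*X1+Y1*Y1 = 1 ->
  let p := al - 2 in let q := -al - 2 in let be := 1 - al*al/4 in
  let D := center_den a c p q be X1 (Y1*Y1) in
  D <> 0 ->
  Yx = c*center_num a c p q be X1 (Y1*Y1)/(2*D) ->
  Yy = -(a*c*c*vconicY p q be X1 Y1)/(2*b*D) ->
  let delta := (2*al*c*c + 4*a*a + 4*b*b)/8 in
  (Yx + c*(a^2+b^2)/(2*b^4))^2 + Yy^2 = (a*(delta - b^2)/(2*b^4))^2.
Proof.
intros hb hc2 hal Hr c1 p q be D hD -> -> delta.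
apply Rminus_diag_uniq.
transitivity (circle_residual a (b*b) c al p q be X1 (Y1*Y1) / (256*b^8*D^2)).
- unfold circle_residual, radius_gap, vconicY_sq, delta. fold D.
  unfold vconicY. field. auto.
- replace (b*b) with (a*a-c*c) by lra. replace (Y1*Y1) with (1-X1*X1) by lra.
  unfold p, q, be. rewrite circle_residual_zero by assumption.
  unfold Rdiv. ring.
Qed.

(* The normalized equation of the image circle, evaluated at the vertex (a X, b Y). *)
Definition inversion_conic (a b c m Yx Yy X Y : R) : R :=
  m*((a+c*X)*(a+c*X)) - 2*((a*X+c)*Yx + b*Y*Yy) + 1.

(* A point Z at squared distance r2 from the inverse of (a X, b Y) in the circle of center
   (-c, 0) and radius rho: with Y = (Z - f1)/rho^2 and m = |Y|^2 - r2/rho^4, the vertex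
   satisfies [inversion_conic] = 0 (the focal distance a + c X clears the denominators). *)
Lemma inversion_equidistance a b c rho X Y Zx Zy r2 :
  0 < b -> b < a -> 0 < c -> c*c = a*a-b*b -> 0 < rho -> X*X+Y*Y = 1 ->
  dist2 (Zx, Zy) (inversion (-c, 0) rho (a*X, b*Y)) = r2 ->
  inversion_conic a b c
    (((Zx+c)/rho^2)*((Zx+c)/rho^2) + (Zy/rho^2)*(Zy/rho^2) - r2/rho^4)
    ((Zx+c)/rho^2) (Zy/rho^2) X Y = 0.
Proof.
intros hb hab hc hc2 hr hxy H. unfold inversion_conic.
unfold inversion in H. rewrite (focal_dist a b c X Y) in H by assumption.
unfold dist2, dot, sub, add, scal in H; simpl in H. subst r2.
assert (hs : 0 < a + c*X) by nra.
assert (Hs := focal_dist_sq a b c X Y hc2 hxy).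
match goal with |- ?L = 0 =>
  transitivity (((a+c*X)*(a+c*X) - ((a*X - -c)*(a*X - -c) + (b*Y - 0)*(b*Y - 0)))
                / ((a+c*X)*(a+c*X))) end.
- field. lra.
- rewrite Hs. unfold Rdiv. ring.
Qed.

Lemma circumcenter_conics a b c rho Zx Zy X1 Y1 X2 Y2 X3 Y3 :
  0 < b -> b < a -> 0 < c -> c*c = a*a-b*b -> 0 < rho ->
  X1*X1+Y1*Y1 = 1 -> X2*X2+Y2*Y2 = 1 -> X3*X3+Y3*Y3 = 1 ->
  is_circumcenter (Zx, Zy) (inversion (-c, 0) rho (a*X1, b*Y1))
    (inversion (-c, 0) rho (a*X2, b*Y2)) (inversion (-c, 0) rho (a*X3, b*Y3)) ->
  exists m,
    inversion_conic a b c m ((Zx+c)/rho^2) (Zy/rho^2) X1 Y1 = 0 /\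
    inversion_conic a b c m ((Zx+c)/rho^2) (Zy/rho^2) X2 Y2 = 0 /\
    inversion_conic a b c m ((Zx+c)/rho^2) (Zy/rho^2) X3 Y3 = 0.
Proof.
intros hb hab hc hc2 hr c1 c2 c3 [h12 h23]. unfold pdist in h12, h23.
assert (dist2_nonneg : forall P Q, 0 <= dist2 P Q)
  by (intros; unfold dist2, dot; nra).
apply sqrt_inj in h12, h23; try apply dist2_nonneg.
set (r2 := dist2 (Zx, Zy) (inversion (-c, 0) rho (a*X1, b*Y1))).
exists (((Zx+c)/rho^2)*((Zx+c)/rho^2) + (Zy/rho^2)*(Zy/rho^2) - r2/rho^4).
split; [|split]; apply (inversion_equidistance a b c rho); unfold r2; auto; congruence.
Qed.

(* Under the closure relation, the normalized circumcenter (Yx, Yy) of the inverted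
   triangle lies on the circle of [center_on_circle]: the inversion conic and the vertex
   conic of the first vertex share the three vertices, hence are proportional. *)
Lemma normalized_center_on_circle a b c al m Yx Yy X1 Y1 X2 Y2 X3 Y3 :
  0 < b -> b < a -> 0 < c -> c*c = a*a - b*b -> 0 < al -> al < 2 ->
  8*al*(a*a) = c*c*(12+4*al-al*al) ->
  X1*X1+Y1*Y1 = 1 -> X2*X2+Y2*Y2 = 1 -> X3*X3+Y3*Y3 = 1 ->
  (X2-X1)*(Y3-Y1) - (Y2-Y1)*(X3-X1) <> 0 ->
  (al-2)*X1*X2 + (-al-2)*Y1*Y2 = 1 - al*al/4 ->
  (al-2)*X1*X3 + (-al-2)*Y1*Y3 = 1 - al*al/4 ->
  inversion_conic a b c m Yx Yy X1 Y1 = 0 ->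
  inversion_conic a b c m Yx Yy X2 Y2 = 0 ->
  inversion_conic a b c m Yx Yy X3 Y3 = 0 ->
  let delta := (2*al*c*c + 4*a*a + 4*b*b)/8 in
  (Yx + c*(a^2+b^2)/(2*b^4))^2 + Yy^2 = (a*(delta - b^2)/(2*b^4))^2.
Proof.
intros hb hab hc hc2 hal hal2 Hr c1 c2 c3 hN b12 b13 i1 i2 i3.
set (p := al-2) in *. set (q := -al-2) in *. set (be := 1 - al*al/4) in *.
assert (Hpsi : forall X Y, inversion_conic a b c m Yx Yy X Y
  = (m*c*c)*(X*X) + (2*a*(c*m - Yx))*X + (-2*b*Yy)*Y + (m*a*a - 2*c*Yx + 1))
  by (intros; unfold inversion_conic; ring).
rewrite Hpsi in i1, i2, i3.
assert (hf2 : vconic2 p q X1 (Y1*Y1) <> 0).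
{ unfold vconic2. intro H.
  destruct (Rplus_sqr_eq_0 (p*X1) (q*Y1)) as [h1 h2]; [unfold Rsqr; lra|].
  apply Rmult_integral in h1, h2. unfold p, q in *. nra. }
destruct (conics_proportional _ _ _ _ _ _ _ _ X1 Y1 X2 Y2 X3 Y3 hN i1
            (vconic_zero p q be X1 Y1 X1 Y1 c1 c1 (or_intror (conj eq_refl eq_refl)))
            i2 (vconic_zero p q be X1 Y1 X2 Y2 c1 c2 (or_introl b12))
            i3 (vconic_zero p q be X1 Y1 X3 Y3 c1 c3 (or_introl b13)))
  as [e1 [eY e0]].
destruct (inverted_center a b c m Yx Yy _ _ _ _ ltac:(lra) ltac:(lra) ltac:(lra) hf2 e1 eY e0)
  as [hD [hYx hYy]].
apply (center_on_circle a b c al X1 Y1); auto; lra.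
Qed.

(* Normal form of a 3-periodic: vertices (a Xi, b Yi) on the unit circle, and a constant
   al = 2 k^2 c^2 > 0 (k the common reflection ratio) such that every two vertices satisfy
   (al-2) Xi Xj - (al+2) Yi Yj = al (a^2+b^2)/c^2 - 2. *)
Lemma three_periodic_normal_form a b c P1 P2 P3 :
  0 < b -> b < a -> 0 < c -> c*c = a*a - b*b -> three_periodic a b P1 P2 P3 ->
  exists X1 Y1 X2 Y2 X3 Y3 al,
    P1 = (a*X1, b*Y1) /\ P2 = (a*X2, b*Y2) /\ P3 = (a*X3, b*Y3) /\
    X1*X1+Y1*Y1 = 1 /\ X2*X2+Y2*Y2 = 1 /\ X3*X3+Y3*Y3 = 1 /\
    (X2-X1)*(Y3-Y1) - (Y2-Y1)*(X3-X1) <> 0 /\ 0 < al /\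
    (al-2)*X1*X2 + (-al-2)*Y1*Y2 = al*(a*a+b*b)/(c*c) - 2 /\
    (al-2)*X1*X3 + (-al-2)*Y1*Y3 = al*(a*a+b*b)/(c*c) - 2 /\
    (al-2)*X2*X3 + (-al-2)*Y2*Y3 = al*(a*a+b*b)/(c*c) - 2.
Proof.
intros hb hab hc hc2 [e1 [e2 [e3 [nc [nb1 [nb2 _]]]]]].
destruct (ellipse_param a b P1) as [X1 [Y1 [-> c1]]]; try lra; auto.
destruct (ellipse_param a b P2) as [X2 [Y2 [-> c2]]]; try lra; auto.
destruct (ellipse_param a b P3) as [X3 [Y3 [-> c3]]]; try lra; auto.
assert (hN : (X2-X1)*(Y3-Y1) - (Y2-Y1)*(X3-X1) <> 0).
{ intro H. apply nc. unfold noncollinear; cbn [fst snd].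
  transitivity (a*b*((X2-X1)*(Y3-Y1) - (Y2-Y1)*(X3-X1))); [ring|rewrite H; ring]. }
destruct (noncollinear_distinct _ _ _ _ _ _ hN) as [n12 [n13 n23]].
destruct (chord_length a b c X2 Y2 X1 Y1) as [d21p d21s]; auto.
destruct (chord_length a b c X3 Y3 X1 Y1) as [d31p d31s]; auto.
destruct (chord_length a b c X3 Y3 X2 Y2) as [d32p d32s]; auto.
assert (g21 := unit_circle_gap_pos X2 Y2 X1 Y1 c2 c1 n12).
assert (g31 := unit_circle_gap_pos X3 Y3 X1 Y1 c3 c1 n13).
assert (g32 := unit_circle_gap_pos X3 Y3 X2 Y2 c3 c2 n23).
apply bisector_ratio in nb1, nb2; try lra.
rewrite (pdist_sym (a*X1, b*Y1) (a*X2, b*Y2)) in nb2.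
set (d21 := pdist (a*X2, b*Y2) (a*X1, b*Y1)) in *.
set (d31 := pdist (a*X3, b*Y3) (a*X1, b*Y1)) in *.
set (d32 := pdist (a*X3, b*Y3) (a*X2, b*Y2)) in *.
set (k := (1 - X2*X1 - Y2*Y1)/d21).
assert (k21 : 1 - X2*X1 - Y2*Y1 = k*d21) by (unfold k; field; lra).
assert (k31 : 1 - X3*X1 - Y3*Y1 = k*d31).
{ transitivity ((1 - X1*X3 - Y1*Y3)/d31 * d31); [field; lra|].
  rewrite nb1. unfold k. replace (X1*X2) with (X2*X1) by ring.
  replace (Y1*Y2) with (Y2*Y1) by ring. reflexivity. }
assert (k32 : 1 - X3*X2 - Y3*Y2 = k*d32).
{ transitivity ((1 - X2*X3 - Y2*Y3)/d32 * d32); [field; lra|].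
  rewrite <- nb2. reflexivity. }
assert (b21 := bilinear_of_ratio a b c k X2 Y2 X1 Y1 d21 hc2 c2 c1 d21s k21 ltac:(lra)).
assert (b31 := bilinear_of_ratio a b c k X3 Y3 X1 Y1 d31 hc2 c3 c1 d31s k31 ltac:(lra)).
assert (b32 := bilinear_of_ratio a b c k X3 Y3 X2 Y2 d32 hc2 c3 c2 d32s k32 ltac:(lra)).
exists X1, Y1, X2, Y2, X3, Y3, (2*k*k*(c*c)).
assert (hk : 0 < k) by (unfold k; apply Rdiv_lt_0_compat; lra).
assert (hbe : 2*k*k*(c*c)*(a*a+b*b)/(c*c) - 2 = 2*k*k*(a*a+b*b) - 2) by (field; lra).
rewrite hbe. repeat split; auto.
- assert (0 < k*k) by (apply Rmult_lt_0_compat; lra).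
  assert (0 < c*c) by (apply Rmult_lt_0_compat; lra). nra.
- rewrite <- b21. ring.
- rewrite <- b31. ring.
- rewrite <- b32. ring.
Qed.

Lemma closure_consequences a b c al :
  0 < b -> 0 < c -> c*c = a*a - b*b -> 0 < al ->
  (al-2)*(-al-2) + (al*(a*a+b*b)/(c*c) - 2)*((al-2)+(-al-2)) = 0 ->
  8*al*(a*a) = c*c*(12+4*al-al*al) /\ al*(a*a+b*b)/(c*c) - 2 = 1 - al*al/4 /\
  al < 2 /\ sqrt (a^4 - a^2*b^2 + b^4) = (2*al*c*c + 4*a*a + 4*b*b)/8.
Proof.
intros hb hc hc2 hal H.
assert (hbe : al*(a*a+b*b)/(c*c) - 2 = 1 - al*al/4) by lra.
assert (Hr : 8*al*(a*a) = c*c*(12+4*al-al*al)).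
{ assert (E : al*(a*a+b*b) = c*c*(3 - al*al/4)).
  { transitivity ((al*(a*a+b*b)/(c*c) - 2 + 2)*(c*c)); [field; lra|]. rewrite hbe. ring. }
  replace (b*b) with (a*a - c*c) in E by lra. lra. }
assert (hal2 : al < 2).
{ assert (hca : c*c < a*a) by nra. assert (hc0 : 0 < c*c) by nra.
  assert (h8 : c*c*(8*al) < c*c*(12+4*al-al*al)) by (rewrite <- Hr; nra).
  apply Rmult_lt_reg_l in h8; nra. }
repeat split; auto.
rewrite <- (sqrt_pow2 ((2*al*c*c + 4*a*a + 4*b*b)/8)) by nra.
f_equal. replace (b^4) with ((b*b)*(b*b)) by ring. replace (b^2) with (b*b) by ring.
replace (b*b) with (a*a - c*c) by lra.
transitivity (a^4 - a^2*(a*a-c*c) + (a*a-c*c)*(a*a-c*c)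
              + c*c/16*(8*al*(a*a) - c*c*(12+4*al-al*al))); [rewrite Hr; ring|].
replace (4*b*b) with (4*(a*a-c*c)) by lra. field.
Qed.

Lemma delta_ge_b2 a b : 0 < b -> b < a -> b^2 <= sqrt (a^4 - a^2*b^2 + b^4).
Proof.
intros hb hab.
rewrite <- (sqrt_pow2 (b^2)) at 1 by nra.
apply sqrt_le_1_alt.
assert (0 <= a^2*(a^2-b^2)) by (apply Rmult_le_pos; nra).
assert (a^4 - a^2*b^2 + b^4 - (b^2)^2 = a^2*(a^2-b^2)) by ring. lra.
Qed.

Lemma rescaled_circle a b c rho Zx Zy R :
  0 < b -> 0 < rho -> 0 <= R ->
  ((Zx+c)/rho^2 + c*(a^2+b^2)/(2*b^4))^2 + (Zy/rho^2)^2 = R^2 ->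
  pdist (Zx, Zy) (- c * (1 + rho^2 * (a^2 + b^2) / (2 * b^4)), 0) = rho^2 * R.
Proof.
intros hb hr hR H. unfold pdist, dist2, dot, sub; cbn [fst snd].
rewrite <- (sqrt_pow2 (rho^2 * R)) by nra.
f_equal.
transitivity (rho^2*rho^2*(((Zx+c)/rho^2 + c*(a^2+b^2)/(2*b^4))^2 + (Zy/rho^2)^2));
  [field; lra|].
rewrite H. ring.
Qed.

Theorem mainTheorem12 :
  forall (a b rho : R) (P1 P2 P3 X : pt),
    0 < b -> b < a -> 0 < rho ->
    three_periodic a b P1 P2 P3 ->
    let c := sqrt (a^2 - b^2) in
    let delta := sqrt (a^4 - a^2 * b^2 + b^4) in
    let f1 : pt := (- c, 0) in
    is_circumcenter X (inversion f1 rho P1) (inversion f1 rho P2) (inversion f1 rho P3) ->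
    pdist X (- c * (1 + rho^2 * (a^2 + b^2) / (2 * b^4)), 0)
    = rho^2 * (a * (delta - b^2) / (2 * b^4)).
Proof.
intros a b rho P1 P2 P3 [Zx Zy] hb hab hrho H3 c delta f1 HX.
assert (hc2 : c*c = a*a - b*b) by (unfold c; rewrite sqrt_sqrt; nra).
assert (hc : 0 < c) by (unfold c; apply sqrt_lt_R0; simpl; nra).
destruct (three_periodic_normal_form a b c P1 P2 P3 hb hab hc hc2 H3)
  as (X1 & Y1 & X2 & Y2 & X3 & Y3 & al & -> & -> & -> & c1 & c2 & c3 & hN & hal & b12 & b13 & b23).
assert (HC := cayley_closure (al-2) (-al-2) (al*(a*a+b*b)/(c*c) - 2) X1 Y1 X2 Y2 X3 Y3 ltac:(lra) ltac:(lra) c1 c2 c3 hN b12 b13 b23).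
destruct (closure_consequences a b c al hb hc hc2 hal HC) as (Hr & hbe & hal2 & hdelta).
rewrite hbe in b12, b13.
destruct (circumcenter_conics a b c rho Zx Zy X1 Y1 X2 Y2 X3 Y3) as (m & i1 & i2 & i3); auto.
apply rescaled_circle; auto.
- assert (0 <= delta - b^2) by (pose proof (delta_ge_b2 a b hb hab); unfold delta; lra).
  apply Rmult_le_pos; [apply Rmult_le_pos; lra|].
  apply Rlt_le, Rinv_0_lt_compat, Rmult_lt_0_compat; [lra|apply pow_lt; lra].
- unfold delta. rewrite hdelta.
  exact (normalized_center_on_circle a b c al m _ _ X1 Y1 X2 Y2 X3 Y3
           hb hab hc hc2 hal hal2 Hr c1 c2 c3 hN b12 b13 i1 i2 i3).
Qed.
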